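(* Let $X$ be a presheaf of sets on $\mathscr{V}_f$ taking values in finite sets. For each $n\in\mathbb{N}$, let $X_n$ be the image of the composite $X\to\mathbb{F}[X]\to q_n\mathbb{F}[X]$, with the canonical surjection $X\twoheadrightarrow X_n$. Then $X_n$ is a finite presheaf of degree at most $n$, and $X\twoheadrightarrow X_n$ is the universal map from $X$ to a finite presheaf of degree at most $n$ (every map from $X$ to such a presheaf factors uniquely through it). These maps form a tower $\cdots\to X_{n+1}\to X_n\to X_{n-1}\to\cdots$ of maps under $X$.
   Context: $p$ prime, $\mathbb{F}=\mathbb{F}_p$, $\mathscr{V}_f$ finite-dimensional $\mathbb{F}$-vector spaces. $\mathscr{F}$ is the abelian category of functors $\mathscr{V}_f^{\mathrm{op}}\to$ ($\mathbb{F}$-vector spaces). $\mathbb{F}[X]\in\mathscr{F}$ is the sectionwise linearization of $X$, with unit $X\hookrightarrow\mathbb{F}[X]$. $q_n:\mathscr{F}\to\mathscr{F}$ is left adjoint to the inclusion of functors of Eilenberg–MacLane polynomial degree $\le n$, with universal quotient $F\twoheadrightarrow q_nF$. A presheaf $Y$ taking finite values is finite of degree at most $n$ if the composite $Y\to\mathbb{F}[Y]\to q_n\mathbb{F}[Y]$ is a monomorphism (equivalently, $Y$ embeds in a functor of $\mathscr{F}$ with a finite composition series and of polynomial degree $\le n$). *)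

From HB Require Import structures.
From mathcomp Require Import all_boot all_order all_algebra.
Set Implicit Arguments. Unset Strict Implicit. Unset Printing Implicit Defensive.
Import GRing.Theory.
Local Open Scope ring_scope.

(* The category V_f of finite-dimensional K-vector spaces is modelled by its
   skeleton: objects are the natural numbers d (standing for K^d, row
   vectors), and a linear map K^m -> K^n is a matrix A : 'M_(m,n) acting by
   v |-> v *m A.  The composite "first A then B" is A *m B.  A contravariant
   functor therefore satisfies  F(A *m B) = F(A) o F(B). *)

Section Defs.
Variable K : fieldType.

Record fpresheaf := FPresheaf {
  pobj : nat -> finType;
  pmap : forall m n, 'M[K]_(m, n) -> pobj n -> pobj m;
  pmap1 : forall n (x : pobj n), pmap (1%:M : 'M[K]_n) x = x;
  pmapM : forall l m n (A : 'M[K]_(l, m)) (B : 'M[K]_(m, n)) (x : pobj n),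
      pmap (A *m B) x = pmap A (pmap B x) }.
Arguments pmap _ {m n}.

Definition pshmor (X Y : fpresheaf) (f : forall d, pobj X d -> pobj Y d) :=
  forall m n (A : 'M[K]_(m, n)) (x : pobj X n),
    f m (pmap X A x) = pmap Y A (f n x).

Record vfunctor := VFunctor {
  fobj : nat -> lmodType K;
  fmap : forall m n, 'M[K]_(m, n) -> fobj n -> fobj m;
  fmap_lin : forall m n (A : 'M[K]_(m, n)) (a : K) (u v : fobj n),
      fmap A (a *: u + v) = a *: fmap A u + fmap A v;
  fmap1 : forall n (x : fobj n), fmap (1%:M : 'M[K]_n) x = x;
  fmapM : forall l m n (A : 'M[K]_(l, m)) (B : 'M[K]_(m, n)) (x : fobj n),
      fmap (A *m B) x = fmap A (fmap B x) }.
Arguments fmap _ {m n}.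

Definition ntrans (F G : vfunctor) (phi : forall d, fobj F d -> fobj G d) :=
  (forall d (a : K) (u v : fobj F d), phi d (a *: u + v) = a *: phi d u + phi d v) /\
  (forall m n (A : 'M[K]_(m, n)) (u : fobj F n),
      phi m (fmap F A u) = fmap G A (phi n u)).

Definition psh_to_fun (X : fpresheaf) (F : vfunctor)
    (f : forall d, pobj X d -> fobj F d) :=
  forall m n (A : 'M[K]_(m, n)) (x : pobj X n), f m (pmap X A x) = fmap F A (f n x).

(* Eilenberg--MacLane polynomial degree <= n: the (n+1)-st cross-effect
   vanishes.  A direct sum decomposition W = V_0 (+) ... (+) V_n is given by
   a complete family of orthogonal idempotents p_0, ..., p_n of W; the
   cross-effect cr_{n+1}F(V_0,...,V_n) is the intersection over i of the
   kernels of the restriction maps F(W) -> F(W_i), W_i = (+)_{j<>i} V_j,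
   i.e. of the kernels of F(1 - p_i) (1 - p_i being the projection of W onto
   W_i followed by the inclusion, and F(projection) being injective). *)
Definition deg_le (F : vfunctor) (n : nat) :=
  forall d (p : 'I_n.+1 -> 'M[K]_d),
    (forall i, p i *m p i = p i) ->
    (forall i j, i != j -> p i *m p j = 0) ->
    \sum_i p i = 1%:M ->
    forall x : fobj F d, (forall i, fmap F (1%:M - p i) x = 0) -> x = 0.

Section Lin.
Variable X : fpresheaf.

Definition lin_map m n (A : 'M[K]_(m, n)) (f : {ffun pobj X n -> K^o}) :
    {ffun pobj X m -> K^o} :=
  [ffun y => \sum_(x | pmap X A x == y) f x].

Lemma lin_map_lin m n (A : 'M[K]_(m, n)) (a : K) (u v : {ffun pobj X n -> K^o}) :
  lin_map A (a *: u + v) = a *: lin_map A u + lin_map A v.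
Proof.
apply/ffunP=> y; rewrite !ffunE.
under eq_bigr do rewrite !ffunE.
by rewrite big_split /= -mulr_sumr.
Qed.

Lemma lin_map1 n (f : {ffun pobj X n -> K^o}) : lin_map (1%:M : 'M[K]_n) f = f.
Proof.
apply/ffunP=> y; rewrite ffunE.
under eq_bigl do rewrite pmap1.
by rewrite big_pred1_eq.
Qed.

Lemma lin_mapM l m n (A : 'M[K]_(l, m)) (B : 'M[K]_(m, n))
    (f : {ffun pobj X n -> K^o}) :
  lin_map (A *m B) f = lin_map A (lin_map B f).
Proof.
apply/ffunP=> y; rewrite !ffunE.
under [RHS]eq_bigr do rewrite ffunE.
rewrite (eq_bigl (fun x => pmap X A (pmap X B x) == y)); last by move=> x; rewrite pmapM.
rewrite (partition_big (pmap X B) (fun z => pmap X A z == y)) /=; last by [].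
apply: eq_bigr => z /eqP Hz; apply: eq_bigl => x.
apply/idP/idP; first by case/andP.
by move=> /eqP Hx; rewrite Hx Hz !eqxx.
Qed.

Definition lin : vfunctor :=
  @VFunctor (fun d => {ffun pobj X d -> K^o}) lin_map lin_map_lin lin_map1 lin_mapM.

Definition lin_unit d (x : pobj X d) : fobj lin d := [ffun y => (y == x)%:R].
End Lin.

Definition is_qn (n : nat) (F Q : vfunctor) (eta : forall d, fobj F d -> fobj Q d) :=
  [/\ deg_le Q n, ntrans eta &
    forall (G : vfunctor) (phi : forall d, fobj F d -> fobj G d),
      deg_le G n -> ntrans phi ->
      exists2 psi : forall d, fobj Q d -> fobj G d, ntrans psi &
        (forall d u, psi d (eta d u) = phi d u) /\
        (forall psi' : forall d, fobj Q d -> fobj G d, ntrans psi' ->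
           (forall d u, psi' d (eta d u) = phi d u) ->
           forall d v, psi' d v = psi d v)].


Definition fin_deg_le (n : nat) (Y : fpresheaf) :=
  exists (Q : vfunctor) (eta : forall d, fobj (lin Y) d -> fobj Q d),
    @is_qn n (lin Y) Q eta /\
    forall d, injective (fun y : pobj Y d => eta d (lin_unit y)).

End Defs.
Arguments is_qn {K} n F Q eta.
Arguments pmap {K} _ {m n}.
Arguments fmap {K} _ {m n}.

(* The map F[X] -> q_n F[X] factors
   through the sectionwise surjection F[X] -> F[X_n], so q_n F[X] is also
   q_n F[X_n], in which X_n embeds: X_n is finite of degree <= n.  Given
   f : X -> Y with Y finite of degree <= n, the composite
   F[X] -> F[Y] -> q_n F[Y] factors through q_n F[X]; since Y embeds in
   q_n F[Y], f is constant on the fibres of X -> X_n and thus factors through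
   X_n.  The same argument applied to q_n F[X], which has degree <= n + 1
   (merge two summands of a direct sum decomposition), gives the tower. *)

From HB Require Import structures.
From mathcomp Require Import all_boot all_order all_algebra.
Import GRing.Theory.
Local Open Scope ring_scope.

Section FiniteDegreeImage.
Context {K : fieldType}.

Lemma fmap0 (F : vfunctor K) m n (A : 'M[K]_(m, n)) : fmap F A 0 = 0.
Proof.
by have := @fmap_lin _ F _ _ A (-1) 0 0; rewrite scaler0 addr0 scaleN1r addNr.
Qed.

Lemma ntrans_comp {F G H : vfunctor K} {phi psi} :
  @ntrans K F G phi -> @ntrans K G H psi -> ntrans (fun d u => psi d (phi d u)).
Proof.
move=> [phi_lin phi_nat] [psi_lin psi_nat]; split=> [d a u v | m n A u].
  by rewrite phi_lin psi_lin.
by rewrite phi_nat psi_nat.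
Qed.

Lemma psh_to_fun_precomp {X Y : fpresheaf K} {F : vfunctor K} {f g} :
  @pshmor K X Y f -> @psh_to_fun K Y F g -> psh_to_fun (fun d x => g d (f d x)).
Proof. by move=> f_nat g_nat m n A x; rewrite f_nat g_nat. Qed.

Lemma psh_to_fun_postcomp {X : fpresheaf K} {F G : vfunctor K} {g phi} :
  @psh_to_fun K X F g -> @ntrans K F G phi -> psh_to_fun (fun d x => phi d (g d x)).
Proof. by move=> g_nat [_ phi_nat] m n A x; rewrite g_nat phi_nat. Qed.

Lemma lin_unit_sum {X : fpresheaf K} {d} (u : fobj (lin X) d) :
  u = \sum_x u x *: lin_unit x.
Proof.
apply/ffunP=> y; rewrite sum_ffunE (bigD1 y) //= big1 => [|x /negbTE xy].
  by rewrite !ffunE eqxx addr0 [_ *: _]mulr1.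
by rewrite !ffunE eq_sym xy [_ *: _]mulr0.
Qed.

Lemma lin_unit_natural (X : fpresheaf K) : psh_to_fun (@lin_unit K X).
Proof.
move=> m n A x; apply/ffunP=> y; rewrite !ffunE /=.
rewrite big_mkcond (bigD1 x) //= big1 => [|z /negbTE zx].
  by rewrite ffunE eqxx addr0 eq_sym; case: ifP.
by rewrite ffunE zx; case: ifP.
Qed.

Section LinearOnLin.
Context {X : fpresheaf K} {d : nat} {V : lmodType K} {F : fobj (lin X) d -> V}.
Hypothesis F_linear : linear F.
#[local] HB.instance Definition _ := GRing.isLinear.Build K _ V *:%R F F_linear.

Lemma linear_lin_unit_sum u : F u = \sum_x u x *: F (lin_unit x).
Proof. by rewrite {1}(lin_unit_sum u) linear_sum; under eq_bigr do rewrite linearZ. Qed.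

End LinearOnLin.

Section LinearOntoLin.
Context {U : lmodType K} {Y : fpresheaf K} {d : nat} {r : U -> fobj (lin Y) d}.
Hypothesis r_linear : linear r.
#[local] HB.instance Definition _ := GRing.isLinear.Build K U _ *:%R r r_linear.

Lemma linear_lin_surj :
  (forall y, exists u, r u = lin_unit y) -> forall v, exists u, r u = v.
Proof.
move=> r_units v; rewrite (lin_unit_sum v).
apply: (big_ind (fun w => exists u, r u = w)).
- by exists 0; rewrite linear0.
- by move=> _ _ [u1 <-] [u2 <-]; exists (u1 + u2); rewrite linearD.
- by move=> y _; have [u <-] := r_units y; exists (v y *: u); rewrite linearZ.
Qed.

End LinearOntoLin.

Lemma lin_ext {X : fpresheaf K} {d} {V : lmodType K} {F G : fobj (lin X) d -> V} :
  linear F -> linear G -> (forall x, F (lin_unit x) = G (lin_unit x)) -> F =1 G.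
Proof.
move=> F_linear G_linear FG u.
rewrite (linear_lin_unit_sum F_linear) (linear_lin_unit_sum G_linear).
by apply: eq_bigr => x _; rewrite FG.
Qed.

Section FreeExtension.
Context {X : fpresheaf K} {F : vfunctor K} (g : forall d, pobj X d -> fobj F d).

Definition lin_extend d : fobj (lin X) d -> fobj F d := fun u => \sum_x u x *: g d x.

Lemma lin_extend_linear d : linear (lin_extend d).
Proof.
move=> a u v; rewrite /lin_extend scaler_sumr -big_split /=.
by apply: eq_bigr => x _; rewrite !ffunE scalerDl scalerA.
Qed.

Lemma lin_extend_unit d x : lin_extend d (lin_unit x) = g d x.
Proof.
rewrite /lin_extend (bigD1 x) //= big1 => [|y /negbTE yx].
  by rewrite ffunE eqxx scale1r addr0.
by rewrite ffunE yx scale0r.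
Qed.

Lemma lin_extend_ntrans : psh_to_fun g -> ntrans lin_extend.
Proof.
move=> g_nat; split=> [|m n A]; first exact: lin_extend_linear.
apply: lin_ext => [a u v | a u v | x].
- by rewrite fmap_lin lin_extend_linear.
- by rewrite lin_extend_linear fmap_lin.
- by rewrite -lin_unit_natural !lin_extend_unit g_nat.
Qed.

End FreeExtension.

Lemma deg_le_S {G : vfunctor K} {n} : deg_le G n -> deg_le G n.+1.
Proof.
move=> G_deg d p p_idem p_orth p_sum x x_cr.
pose w := widen_ord (leqnSn n.+1).
have w_max i : w i != ord_max by rewrite -val_eqE /= neq_ltn ltn_ord.
have w_neq i j : i != j -> w i != w j by [].
pose q i := if i == ord_max then p (w i) + p ord_max else p (w i).
apply: (G_deg d q) => [i | i j ij | | i].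
- rewrite /q; case: eqP => // _.
  by rewrite mulmxDl !mulmxDr !p_idem !p_orth ?addr0 ?add0r // eq_sym.
- rewrite /q; case: eqP => [i_max | _]; case: eqP => [j_max | _].
  + by move: ij; rewrite i_max j_max eqxx.
  + by rewrite mulmxDl (p_orth _ _ (w_neq _ _ ij)) p_orth ?addr0 // eq_sym w_max.
  + by rewrite mulmxDr (p_orth _ _ (w_neq _ _ ij)) p_orth ?addr0 ?w_max.
  + exact: p_orth (w_neq _ _ ij).
- rewrite -p_sum big_ord_recr [RHS]big_ord_recr [in RHS]big_ord_recr /= /q eqxx addrA.
  congr (_ + _ + _); apply: eq_bigr => i _.
  by rewrite ifN // -val_eqE /= neq_ltn ltn_ord.
- rewrite /q; case: eqP => _; last exact: x_cr.
  have -> : 1%:M - (p (w i) + p ord_max) = (1%:M - p (w i)) *m (1%:M - p ord_max).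
    by rewrite mulmxBl !mulmxBr !mul1mx mulmx1 p_orth ?w_max // subr0 opprD addrA addrAC.
  by rewrite fmapM x_cr fmap0.
Qed.

Lemma is_qn_quotient {n} {F F' Q : vfunctor K} {eta}
    (r : forall d, fobj F d -> fobj F' d) {eta'} :
  is_qn n F Q eta -> @ntrans K F F' r -> @ntrans K F' Q eta' ->
  (forall d v, exists u, r d u = v) -> (forall d u, eta' d (r d u) = eta d u) ->
  is_qn n F' Q eta'.
Proof.
move=> [Q_deg _ eta_univ] r_nt eta'_nt r_surj eta_fact.
split=> // G phi G_deg phi_nt.
have [psi psi_nt [psi_eta psi_uniq]] := eta_univ G _ G_deg (ntrans_comp r_nt phi_nt).
exists psi => //; split=> [d v | psi' psi'_nt psi'_eta'].
  by have [u <-] := r_surj d v; rewrite eta_fact psi_eta.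
by apply: psi_uniq => // d u; rewrite -eta_fact psi'_eta'.
Qed.

Lemma is_qn_S_eq {n} {F Q Q' : vfunctor K} {eta eta'} :
  is_qn n F Q eta -> is_qn n.+1 F Q' eta' ->
  forall d u1 u2, eta' d u1 = eta' d u2 -> eta d u1 = eta d u2.
Proof.
move=> [Q_deg eta_nt _] [_ _ eta'_univ] d u1 u2 eq12.
have [psi _ [psi_eta' _]] := eta'_univ Q eta (deg_le_S Q_deg) eta_nt.
by rewrite -!psi_eta' eq12.
Qed.

Section Image.
Context {X : fpresheaf K} {F : vfunctor K} {g : forall d, pobj X d -> fobj F d}.
Hypothesis g_nat : psh_to_fun g.

Definition img_obj d : finType := seq_sub (codom (g d)).

Lemma img_fmap_codom {m n} (A : 'M[K]_(m, n)) {v} :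
  v \in codom (g n) -> fmap F A v \in codom (g m).
Proof. by case/codomP=> x ->; rewrite -g_nat codom_f. Qed.

Definition img_map {m n} (A : 'M[K]_(m, n)) (y : img_obj n) : img_obj m :=
  SeqSub (img_fmap_codom A (ssvalP y)).

Lemma img_map1 n (y : img_obj n) : img_map (1%:M : 'M[K]_n) y = y.
Proof. by apply: val_inj; rewrite /= fmap1. Qed.

Lemma img_mapM l m n (A : 'M[K]_(l, m)) (B : 'M[K]_(m, n)) (y : img_obj n) :
  img_map (A *m B) y = img_map A (img_map B y).
Proof. by apply: val_inj; rewrite /= fmapM. Qed.

Definition img_psh : fpresheaf K := FPresheaf img_map1 img_mapM.

Definition img_proj d (x : pobj X d) : pobj img_psh d := SeqSub (codom_f (g d) x).

Definition img_incl d (y : pobj img_psh d) : fobj F d := ssval y.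

Lemma img_proj_pshmor : pshmor img_proj.
Proof. by move=> m n A x; apply: val_inj; rewrite /= g_nat. Qed.

Lemma img_proj_surj {d} (y : pobj img_psh d) : exists x, img_proj d x = y.
Proof. by case: y => v /[dup] /codomP [x ->] gx; exists x; apply: val_inj. Qed.

Lemma img_proj_eq d (x1 x2 : pobj X d) : g d x1 = g d x2 -> img_proj d x1 = img_proj d x2.
Proof. by move=> eq_g; apply: val_inj. Qed.

Lemma img_incl_psh_to_fun : psh_to_fun img_incl.
Proof. by []. Qed.

Lemma img_incl_inj d : injective (img_incl d).
Proof. exact: val_inj. Qed.

Lemma img_proj_epi (Y : fpresheaf K) (h h' : forall d, pobj img_psh d -> pobj Y d) :
  (forall d x, h d (img_proj d x) = h' d (img_proj d x)) -> forall d y, h d y = h' d y.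
Proof. by move=> hh' d y; have [x <-] := img_proj_surj y; apply: hh'. Qed.

Section Lift.
Context {Y : fpresheaf K} (f : forall d, pobj X d -> pobj Y d).

(* [iinv] picks some preimage of [y]; under [f_sep] the choice is irrelevant. *)
Definition img_lift d (y : pobj img_psh d) : pobj Y d := f d (iinv (ssvalP y)).

Hypothesis f_sep : forall d x1 x2, g d x1 = g d x2 -> f d x1 = f d x2.

Lemma img_lift_proj d x : img_lift d (img_proj d x) = f d x.
Proof. exact/f_sep/(f_iinv (codom_f (g d) x)). Qed.

Lemma img_lift_pshmor : pshmor f -> pshmor img_lift.
Proof.
move=> f_nat m n A y; have [x <-] := img_proj_surj y.
by rewrite -img_proj_pshmor !img_lift_proj f_nat.
Qed.

Lemma img_lift_universal : pshmor f ->
  exists2 h : forall d, pobj img_psh d -> pobj Y d, pshmor h &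
    (forall d x, h d (img_proj d x) = f d x) /\
    (forall h', pshmor h' -> (forall d x, h' d (img_proj d x) = f d x) ->
       forall d y, h' d y = h d y).
Proof.
move=> f_nat; exists img_lift; first exact: img_lift_pshmor.
split=> [|h' _ h'_proj]; first exact: img_lift_proj.
by apply: img_proj_epi => d x; rewrite h'_proj img_lift_proj.
Qed.

End Lift.
End Image.

Section QnImage.
Context {X : fpresheaf K} {Q : vfunctor K}.
Implicit Type eta : forall d, fobj (lin X) d -> fobj Q d.

Definition qn_unit eta d (x : pobj X d) : fobj Q d := eta d (lin_unit x).

Context {n : nat} {eta : forall d, fobj (lin X) d -> fobj Q d}.
Hypothesis hQ : is_qn n (lin X) Q eta.

Lemma qn_unit_natural : psh_to_fun (qn_unit eta).
Proof.
by case: hQ => _ eta_nt _; apply: psh_to_fun_postcomp (lin_unit_natural X) eta_nt.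
Qed.

Lemma img_qn_fin_deg_le : fin_deg_le n (img_psh qn_unit_natural).
Proof.
pose r := lin_extend (fun d x => lin_unit (img_proj qn_unit_natural d x)).
pose eta' := lin_extend (img_incl qn_unit_natural).
exists Q, eta'; split=> [|d y1 y2 /=]; last first.
  by rewrite /eta' !lin_extend_unit; apply: img_incl_inj.
apply: (is_qn_quotient r hQ).
- apply/lin_extend_ntrans/psh_to_fun_precomp; last exact: lin_unit_natural.
  exact: img_proj_pshmor.
- exact/lin_extend_ntrans/img_incl_psh_to_fun.
- move=> d; apply: (linear_lin_surj (lin_extend_linear _ d)) => y.
  by have [x <-] := img_proj_surj _ y; exists (lin_unit x); rewrite lin_extend_unit.
- move=> d; apply: lin_ext => [a u v | | x].
  + by rewrite /eta' /r !lin_extend_linear.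
  + by case: hQ => _ [eta_lin _] _; apply: eta_lin.
  + by rewrite /eta' /r !lin_extend_unit.
Qed.

Lemma qn_unit_separates (Y : fpresheaf K) (f : forall d, pobj X d -> pobj Y d) :
  fin_deg_le n Y -> pshmor f ->
  forall d x1 x2, qn_unit eta d x1 = qn_unit eta d x2 -> f d x1 = f d x2.
Proof.
move=> [QY [etaY [[QY_deg etaY_nt _] etaY_inj]]] f_nat d x1 x2 eq12.
pose phi := lin_extend (fun d x => etaY d (lin_unit (f d x))).
have phi_nt : ntrans phi.
  apply/lin_extend_ntrans/(psh_to_fun_postcomp _ etaY_nt).
  exact: psh_to_fun_precomp f_nat (lin_unit_natural Y).
have [_ _ eta_univ] := hQ.
have [psi _ [psi_eta _]] := eta_univ QY phi QY_deg phi_nt.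
have phi_unit x : phi d (lin_unit x) = etaY d (lin_unit (f d x)) := lin_extend_unit _ d x.
by apply: etaY_inj => /=; rewrite -!phi_unit -!psi_eta; congr (psi d _).
Qed.

End QnImage.

Lemma img_proj_qn_S_eq {X : fpresheaf K} {Q Q' : vfunctor K} {n eta eta'}
    (hQ : is_qn n (lin X) Q eta) (hQ' : is_qn n.+1 (lin X) Q' eta') d x1 x2 :
  qn_unit eta' d x1 = qn_unit eta' d x2 ->
  img_proj (qn_unit_natural hQ) d x1 = img_proj (qn_unit_natural hQ) d x2.
Proof. by move=> eq12; apply: img_proj_eq; apply: (is_qn_S_eq hQ hQ' d _ _ eq12). Qed.

End FiniteDegreeImage.

Theorem proposition3p11 (p : nat) (hp : prime p) (X : fpresheaf 'F_p)
    (Q : nat -> vfunctor 'F_p)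
    (eta : forall n d, fobj (lin X) d -> fobj (Q n) d)
    (hQ : forall n, is_qn n (lin X) (Q n) (eta n)) :
  exists (Xn : nat -> fpresheaf 'F_p)
         (pi : forall n d, pobj X d -> pobj (Xn n) d)
         (iota : forall n d, pobj (Xn n) d -> fobj (Q n) d)
         (t : forall n d, pobj (Xn n.+1) d -> pobj (Xn n) d),
  forall n,
    [/\ (* X_n is the image of X -> F[X] -> q_n F[X]: *)
        [/\ pshmor (pi n), (forall d (y : pobj (Xn n) d), exists x, pi n d x = y),
            psh_to_fun (iota n), (forall d, injective (iota n d)) &
            (forall d (x : pobj X d), iota n d (pi n d x) = eta n d (lin_unit x))],
        (* X_n is finite of degree at most n: *)
        fin_deg_le n (Xn n),
        (* X -> X_n is universal among maps to finite presheaves of degree <= n: *)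
        (forall (Y : fpresheaf 'F_p) (f : forall d, pobj X d -> pobj Y d),
           fin_deg_le n Y -> pshmor f ->
           exists2 g : forall d, pobj (Xn n) d -> pobj Y d, pshmor g &
             (forall d x, g d (pi n d x) = f d x) /\
             (forall g' : forall d, pobj (Xn n) d -> pobj Y d, pshmor g' ->
                (forall d x, g' d (pi n d x) = f d x) ->
                forall d y, g' d y = g d y)) &
        (* the tower X_{n+1} -> X_n of maps under X: *)
        (pshmor (t n) /\ forall d (x : pobj X d), t n d (pi n.+1 d x) = pi n d x)].
Proof.
pose g_nat n := qn_unit_natural (hQ n).
exists (fun n => img_psh (g_nat n)), (fun n => img_proj (g_nat n)),
  (fun n => img_incl (g_nat n)), (fun n => img_lift (g_nat n.+1) (img_proj (g_nat n))).
move=> n; have tower_sep := img_proj_qn_S_eq (hQ n) (hQ n.+1).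
split.
- split=> //; [exact: img_proj_pshmor | exact: img_proj_surj | exact: img_incl_inj].
- exact: img_qn_fin_deg_le.
- move=> Y f Y_deg f_nat.
  exact: img_lift_universal (qn_unit_separates (hQ n) Y f Y_deg f_nat) f_nat.
- split; first exact: img_lift_pshmor tower_sep (img_proj_pshmor _).
  exact: img_lift_proj tower_sep.
Qed.
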